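(* Let $\Phi$ be a second-order constraint problem and $J$ an interpretation of the index symbols. (1) Soundness: if $J\models\mathrm{sk}(\Phi)$, then $(J,\xi_{sk})$ is a model of $\Phi$. (2) Completeness: if $(J,\xi)$ is a model of $\Phi$ for some second-order substitution $\xi$, then $J'\models\mathrm{sk}(\Phi)$ for some interpretation $J'$ extending $J$ to the skolem functions $f_\alpha$.
   Context: Index terms over index variables $i$ and index symbols $g$ (including $0,\mathsf s,+$); an interpretation $J$ maps each $k$-ary $g$ to a total weakly monotone function $\mathbb N^k\to\mathbb N$ ($0,\mathsf s,+$ standard); $a\le_J b$ iff $[a]^\beta_J\le[b]^\beta_J$ for every assignment $\beta$. Second-order index terms: $a::=i\mid\alpha\mid g(a_1,\dots,a_{\mathrm{ar}(g)})$ with $\alpha$ second-order index variables; $\mathrm{Var}(a)$ and $\mathrm{SOVar}(a)$ are the sets of first- and second-order variables of $a$. An SOCP $\Phi$ is a set of inequalities $a\le b$ and occurrence constraints $i\notin\alpha$. A second-order substitution $\xi$ maps second-order variables to index terms without second-order variables. $(J,\xi)$ is a model of $\Phi$ if $a\xi\le_J b\xi$ for all inequalities and $i\notin\mathrm{Var}(\xi(\alpha))$ for all occurrence constraints in $\Phi$. A first-order constraint problem (FOCP) is a set of inequalities without second-order variables; $J\models\Psi$ means $a\le_J b$ for all $(a\le b)\in\Psi$. Skolemisation: let $V(\beta)$ (for second-order variables $\beta$ of $\Phi$) be the least sets with, for every $(a\le b)\in\Phi$ such that $\beta\in\mathrm{SOVar}(b)$, $\mathrm{Var}(a)\subseteq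 V(\beta)$ and $V(\alpha)\subseteq V(\beta)$ for each $\alpha\in\mathrm{SOVar}(a)$; set $\mathrm{SV}(\beta)=V(\beta)\setminus\{i\mid(i\notin\beta)\in\Phi\}$. For each second-order variable $\alpha$ of $\Phi$ let $f_\alpha$ be a fresh index symbol of arity $|\mathrm{SV}(\alpha)|$; the skolem substitution is $\xi_{sk}(\alpha)=f_\alpha(i_1,\dots,i_k)$ where $\mathrm{SV}(\alpha)=\{i_1,\dots,i_k\}$ (in a fixed order). The skolemisation of $\Phi$ is the FOCP $\mathrm{sk}(\Phi)=\{a\xi_{sk}\le b\xi_{sk}\mid(a\le b)\in\Phi\}$. *)

From Stdlib Require Import List Arith.
Import ListNotations.
Set Implicit Arguments.

Inductive term (S : Type) : Type :=
| TVar : nat -> term S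
| TSO : nat -> term S
| TZero : term S
| TSucc : term S -> term S
| TPlus : term S -> term S -> term S
| TFun : S -> list (term S) -> term S.

Arguments TVar {S} _.
Arguments TSO {S} _.
Arguments TZero {S}.
Arguments TSucc {S} _.
Arguments TPlus {S} _ _.
Arguments TFun {S} _ _.

Fixpoint wf {S} (ar : S -> nat) (t : term S) : Prop :=
  match t with
  | TVar _ | TSO _ | TZero => True
  | TSucc a => wf ar a
  | TPlus a b => wf ar a /\ wf ar b
  | TFun g args =>
      length args = ar g /\
      (fix wfl (l : list (term S)) : Prop :=
         match l with nil => True | u :: l' => wf ar u /\ wfl l' end) args
  end.

Fixpoint vars {S} (t : term S) : list nat :=
  match t with
  | TVar i => [i]
  | TSO _ | TZero => []
  | TSucc a => vars a
  | TPlus a b => vars a ++ vars b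
  | TFun _ args =>
      (fix vl (l : list (term S)) : list nat :=
         match l with nil => [] | u :: l' => vars u ++ vl l' end) args
  end.

Fixpoint sovars {S} (t : term S) : list nat :=
  match t with
  | TSO a => [a]
  | TVar _ | TZero => []
  | TSucc a => sovars a
  | TPlus a b => sovars a ++ sovars b
  | TFun _ args =>
      (fix vl (l : list (term S)) : list nat :=
         match l with nil => [] | u :: l' => sovars u ++ vl l' end) args
  end.

(* Renaming of index symbols (used to view a term over S as a term over the
   extended signature S + skolem symbols). *)
Fixpoint rename {S T} (f : S -> T) (t : term S) : term T :=
  match t with
  | TVar i => TVar i
  | TSO a => TSO a
  | TZero => TZero
  | TSucc a => TSucc (rename f a)
  | TPlus a b => TPlus (rename f a) (rename f b)
  | TFun g args => TFun (f g) (map (rename f) args)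
  end.

Fixpoint subst {S} (xi : nat -> term S) (t : term S) : term S :=
  match t with
  | TVar i => TVar i
  | TSO a => xi a
  | TZero => TZero
  | TSucc a => TSucc (subst xi a)
  | TPlus a b => TPlus (subst xi a) (subst xi b)
  | TFun g args => TFun g (map (subst xi) args)
  end.

(* Value [a]^beta_J ; 0, s, + are interpreted in the standard way.
   (Second-order variables get value 0; evaluation is only used on terms
   without second-order variables.) *)
Fixpoint eval {S} (J : S -> list nat -> nat) (beta : nat -> nat) (t : term S)
  : nat :=
  match t with
  | TVar i => beta i
  | TSO _ => 0
  | TZero => 0
  | TSucc a => Datatypes.S (eval J beta a)
  | TPlus a b => eval J beta a + eval J beta b
  | TFun g args => J g (map (eval J beta) args)
  end.

(* J is an interpretation: each k-ary symbol g denotes a (total) weakly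
   monotone function N^k -> N (represented on lists of length k). *)
Definition interpretation {S} (ar : S -> nat) (J : S -> list nat -> nat) : Prop :=
  forall g (l1 l2 : list nat),
    length l1 = ar g -> Forall2 le l1 l2 -> J g l1 <= J g l2.

Definition leJ {S} (J : S -> list nat -> nat) (a b : term S) : Prop :=
  forall beta : nat -> nat, eval J beta a <= eval J beta b.

(* Constraints of an SOCP: inequalities a <= b and occurrence constraints
   i \notin alpha. *)
Inductive constr (S : Type) : Type :=
| Le : term S -> term S -> constr S
| NotIn : nat -> nat -> constr S.

Arguments Le {S} _ _.
Arguments NotIn {S} _ _.

Definition socp (S : Type) := list (constr S).

Definition wf_socp {S} (ar : S -> nat) (Phi : socp S) : Prop :=
  forall a b, In (Le a b) Phi -> wf ar a /\ wf ar b.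

Definition so_subst {S} (ar : S -> nat) (xi : nat -> term S) : Prop :=
  forall alpha, wf ar (xi alpha) /\ sovars (xi alpha) = [].

Definition is_model {S} (J : S -> list nat -> nat) (xi : nat -> term S)
  (Phi : socp S) : Prop :=
  (forall a b, In (Le a b) Phi -> leJ J (subst xi a) (subst xi b)) /\
  (forall i alpha, In (NotIn i alpha) Phi -> ~ In i (vars (xi alpha))).

Definition focp (S : Type) := list (term S * term S).

Definition satisfies {S} (J : S -> list nat -> nat) (Psi : focp S) : Prop :=
  forall a b, In (a, b) Psi -> leJ J a b.

(* V(beta): least family of sets with the two closure conditions.
   [inV Phi beta i] means i \in V(beta). *)
Inductive inV {S} (Phi : socp S) : nat -> nat -> Prop :=
| inV_var : forall a b beta i,
    In (Le a b) Phi -> In beta (sovars b) -> In i (vars a) -> inV Phi beta i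
| inV_so : forall a b beta alpha i,
    In (Le a b) Phi -> In beta (sovars b) -> In alpha (sovars a) ->
    inV Phi alpha i -> inV Phi beta i.

Definition inSV {S} (Phi : socp S) (beta i : nat) : Prop :=
  inV Phi beta i /\ ~ In (NotIn i beta) Phi.

Definition enumerates_SV {S} (Phi : socp S) (sv : nat -> list nat) : Prop :=
  forall alpha, NoDup (sv alpha) /\ (forall i, In i (sv alpha) <-> inSV Phi alpha i).

(* Extended signature: original symbols (inl g) and skolem symbols
   f_alpha = inr alpha, of arity |SV(alpha)|. *)
Definition ar_sk {S} (ar : S -> nat) (sv : nat -> list nat) (g : S + nat) : nat :=
  match g with inl g' => ar g' | inr alpha => length (sv alpha) end.

Definition xi_sk {S} (sv : nat -> list nat) (alpha : nat) : term (S + nat) :=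
  TFun (inr alpha) (map TVar (sv alpha)).

Definition lift_socp {S} (Phi : socp S) : socp (S + nat) :=
  map (fun c => match c with
                | Le a b => Le (rename inl a) (rename inl b)
                | NotIn i alpha => NotIn i alpha
                end) Phi.

Fixpoint sk {S} (sv : nat -> list nat) (Phi : socp S) : focp (S + nat) :=
  match Phi with
  | nil => nil
  | Le a b :: Phi' =>
      (subst (xi_sk sv) (rename inl a), subst (xi_sk sv) (rename inl b))
        :: sk sv Phi'
  | NotIn _ _ :: Phi' => sk sv Phi'
  end.

From Stdlib Require Import List Arith Lia ClassicalEpsilon ssreflect.

(* Soundness holds because the variables of [xi_sk alpha] are exactly SV(alpha),
   which omits every [i] with [i \notin alpha] in Phi.  For completeness, given a
   model (J, xi), interpret f_alpha as the map sending the values of SV(alpha) to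
   the value of xi(alpha) under the assignment that takes these values on SV(alpha)
   and 0 elsewhere; this is monotone since J is.  To check a skolemised constraint
   a <= b at an assignment beta, evaluate the model's constraint at beta', equal to
   beta on the intersection of the V(gamma), gamma in SOVar(b), and 0 elsewhere.
   By monotonicity the skolemised a lies below a xi at beta' (the closure
   conditions of V put Var(a) and every SV(alpha), alpha in SOVar(a), inside that
   intersection), and b xi at beta' lies below the skolemised b (a variable of
   xi(gamma) lying in V(gamma) is in SV(gamma) by the occurrence constraints). *)

Section Terms.
Context {S : Type}.

Section TermInd.
Variable P : term S -> Prop.
Hypothesis P_var : forall i, P (TVar i).
Hypothesis P_so : forall alpha, P (TSO alpha).
Hypothesis P_zero : P TZero.
Hypothesis P_succ : forall a, P a -> P (TSucc a).
Hypothesis P_plus : forall a b, P a -> P b -> P (TPlus a b).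
Hypothesis P_fun : forall g args, Forall P args -> P (TFun g args).

Fixpoint term_ind' (t : term S) : P t :=
  match t with
  | TVar i => P_var i
  | TSO alpha => P_so alpha
  | TZero => P_zero
  | TSucc a => P_succ a (term_ind' a)
  | TPlus a b => P_plus a b (term_ind' a) (term_ind' b)
  | TFun g args => P_fun g args
      ((fix go (l : list (term S)) : Forall P l :=
          match l with
          | nil => Forall_nil _
          | u :: l' => @Forall_cons _ P u l' (term_ind' u) (go l')
          end) args)
  end.
End TermInd.

Lemma vars_TFun g args : vars (TFun g args) = flat_map (@vars S) args.
Proof. by induction args as [|u args IH]; rewrite //= -IH. Qed.

Lemma sovars_TFun g args : sovars (TFun g args) = flat_map (@sovars S) args.
Proof. by induction args as [|u args IH]; rewrite //= -IH. Qed.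

Lemma wf_TFun (ar : S -> nat) g args :
  wf ar (TFun g args) <-> length args = ar g /\ Forall (wf ar) args.
Proof.
  simpl; split; move=> [Hlen Hargs]; split=> //; clear Hlen.
  - elim: args Hargs => [|u args IH] //= [Hu Hargs].
    by constructor; last apply: IH.
  - by elim: Hargs => [|u us Hu _ IH] //=.
Qed.

Fixpoint evalSO (J : S -> list nat -> nat) (beta F : nat -> nat) (t : term S) : nat :=
  match t with
  | TVar i => beta i
  | TSO alpha => F alpha
  | TZero => 0
  | TSucc a => Datatypes.S (evalSO J beta F a)
  | TPlus a b => evalSO J beta F a + evalSO J beta F b
  | TFun g args => J g (map (evalSO J beta F) args)
  end.

Lemma evalSO_mono {ar : S -> nat} {J} : interpretation ar J ->
  forall t beta1 beta2 F1 F2, wf ar t ->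
  (forall i, In i (vars t) -> beta1 i <= beta2 i) ->
  (forall alpha, In alpha (sovars t) -> F1 alpha <= F2 alpha) ->
  evalSO J beta1 F1 t <= evalSO J beta2 F2 t.
Proof.
  move=> HJ t; induction t as [i|alpha| |a IH|a b IHa IHb|g args IH] using term_ind';
    move=> beta1 beta2 F1 F2 Hwf Hvars Hsovars /=.
  - by apply: Hvars; left.
  - by apply: Hsovars; left.
  - by [].
  - by apply/le_n_S/IH.
  - case: Hwf => Hwfa Hwfb; simpl in Hvars, Hsovars.
    apply: Nat.add_le_mono; [apply: IHa|apply: IHb] => // j Hj;
      (apply: Hvars || apply: Hsovars); apply: in_or_app; auto.
  - case/wf_TFun: Hwf => Hlen Hwf.
    rewrite vars_TFun in Hvars; rewrite sovars_TFun in Hsovars.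
    apply: HJ; first by rewrite length_map.
    clear Hlen; induction IH as [|u args IHu _ IHargs]; first by constructor.
    inversion Hwf; constructor; [apply: IHu|apply: IHargs] => // j Hj;
      (apply: Hvars || apply: Hsovars); apply: in_or_app; auto.
Qed.

Lemma eval_evalSO J beta t : eval J beta t = evalSO J beta (fun _ => 0) t.
Proof.
  induction t as [| | | | |g args IH] using term_ind'; rewrite //=; f_equal; try done.
  by apply: map_ext_in => u Hu; rewrite Forall_forall in IH; apply: IH.
Qed.

Lemma eval_mono {ar : S -> nat} {J} : interpretation ar J ->
  forall t beta1 beta2, wf ar t ->
  (forall i, In i (vars t) -> beta1 i <= beta2 i) ->
  eval J beta1 t <= eval J beta2 t.
Proof. by move=> HJ t beta1 beta2 Hwf Hvars; rewrite !eval_evalSO; apply: (evalSO_mono HJ _ _ _ _ _ Hwf Hvars). Qed.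

Lemma eval_subst J beta xi t :
  eval J beta (subst xi t) = evalSO J beta (fun alpha => eval J beta (xi alpha)) t.
Proof.
  induction t as [| | | | |g args IH] using term_ind'; rewrite //=; f_equal; try done.
  by rewrite map_map; apply: map_ext_in => u Hu; rewrite Forall_forall in IH; apply: IH.
Qed.

Lemma eval_skolem (K : S + nat -> list nat -> nat) sv beta t :
  eval K beta (subst (xi_sk sv) (rename inl t)) =
  evalSO (fun g => K (inl g)) beta (fun alpha => K (inr alpha) (map beta (sv alpha))) t.
Proof.
  induction t as [| | | | |g args IH] using term_ind'; rewrite //=; f_equal; try done;
    rewrite !map_map //.
  by apply: map_ext_in => u Hu; rewrite Forall_forall in IH; apply: IH.
Qed.

Lemma In_sk sv (Phi : socp S) x y : In (x, y) (sk sv Phi) ->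
  exists a b, In (Le a b) Phi /\ x = subst (xi_sk sv) (rename inl a) /\
    y = subst (xi_sk sv) (rename inl b).
Proof.
  induction Phi as [|[a b|i alpha] Phi IH]; rewrite //=.
  - case=> [[<- <-]|/IH [a' [b' [? [-> ->]]]]]; eauto 10.
  - by case/IH=> a' [b' [? [-> ->]]]; eauto 10.
Qed.

Lemma sk_In sv (Phi : socp S) a b : In (Le a b) Phi ->
  In (subst (xi_sk sv) (rename inl a), subst (xi_sk sv) (rename inl b)) (sk sv Phi).
Proof.
  induction Phi as [|[a' b'|i alpha] Phi IH]; rewrite //=.
  - by case=> [[-> ->]|/IH]; auto.
  - by case=> [//|/IH].
Qed.

End Terms.

Lemma xi_sk_so_subst S (ar : S -> nat) sv : so_subst (ar_sk ar sv) (xi_sk sv).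
Proof.
  move=> alpha; rewrite /xi_sk; split.
  - apply/wf_TFun; split; first by rewrite length_map.
    by apply/Forall_forall => u /in_map_iff [i [<- _]].
  - by rewrite sovars_TFun; elim: (sv alpha).
Qed.

Lemma xi_sk_model S (Phi : socp S) sv J :
  enumerates_SV Phi sv -> satisfies J (sk sv Phi) ->
  is_model J (xi_sk sv) (lift_socp Phi).
Proof.
  move=> Hsv Hsat; split.
  - move=> a b /in_map_iff [[a' b'|i' alpha'] [Heq Hin]]; inversion Heq; subst.
    by apply: Hsat; apply: sk_In.
  - move=> i alpha /in_map_iff [[a' b'|i' alpha'] [Heq Hin]]; inversion Heq; subst.
    rewrite /xi_sk vars_TFun => Hi.
    have Hsv_i : In i (sv alpha).
    { by move: Hi; elim: (sv alpha) => [|j s IH] //= [->|/IH]; auto. }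
    by case/(proj2 (Hsv alpha) i): Hsv_i.
Qed.

Fixpoint position (i : nat) (s : list nat) : nat :=
  match s with
  | nil => 0
  | j :: s' => if Nat.eqb i j then 0 else Datatypes.S (position i s')
  end.

(* Reads the argument list [l] of a skolem function as values of the variables [s], in order. *)
Definition args_assignment (s l : list nat) (i : nat) : nat :=
  if in_dec Nat.eq_dec i s is left _ then nth (position i s) l 0 else 0.

Lemma args_assignment_map s beta i :
  args_assignment s (map beta s) i = if in_dec Nat.eq_dec i s is left _ then beta i else 0.
Proof.
  rewrite /args_assignment; case: in_dec => // Hi.
  elim: s Hi => [|j s IH] //= [->|Hi]; first by rewrite Nat.eqb_refl.
  by case: Nat.eqb_spec => [->|_] //; apply: IH.
Qed.

Lemma args_assignment_mono s l1 l2 i :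
  Forall2 le l1 l2 -> args_assignment s l1 i <= args_assignment s l2 i.
Proof.
  rewrite /args_assignment => H12; case: in_dec => // _.
  by elim: H12 (position i s) => [|x y l1' l2' Hxy _ IH] [|k] //=.
Qed.

Definition restrict (P : nat -> Prop) (beta : nat -> nat) (i : nat) : nat :=
  if excluded_middle_informative (P i) is left _ then beta i else 0.

Section Completeness.
Context {S : Type}.
Variables (ar : S -> nat) (Phi : socp S) (sv : nat -> list nat).
Variables (J : S -> list nat -> nat) (xi : nat -> term S).
Hypothesis Hwf : wf_socp ar Phi.
Hypothesis Hsv : enumerates_SV Phi sv.
Hypothesis HJ : interpretation ar J.
Hypothesis Hxi : so_subst ar xi.
Hypothesis Hmodel : is_model J xi Phi.

Definition skolem_ext (g : S + nat) (l : list nat) : nat :=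
  match g with
  | inl g' => J g' l
  | inr alpha => eval J (args_assignment (sv alpha) l) (xi alpha)
  end.

Lemma skolem_ext_interpretation : interpretation (ar_sk ar sv) skolem_ext.
Proof.
  move=> [g|alpha] l1 l2 Hlen H12 /=; first by apply: HJ.
  apply: (eval_mono HJ _ _ _ (proj1 (Hxi alpha))) => i _.
  exact: args_assignment_mono.
Qed.

Let skolem_values (beta : nat -> nat) (alpha : nat) : nat :=
  skolem_ext (inr alpha) (map beta (sv alpha)).

Let in_common_V (b : term S) (i : nat) : Prop :=
  forall gamma, In gamma (sovars b) -> inV Phi gamma i.

Lemma skolem_lower a b beta : In (Le a b) Phi ->
  evalSO J beta (skolem_values beta) a <=
  eval J (restrict (in_common_V b) beta) (subst xi a).
Proof.
  move=> Hab; rewrite eval_subst.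
  apply: (evalSO_mono HJ); first exact: (proj1 (Hwf _ _ Hab)).
  - move=> i Hi; rewrite /restrict; case: excluded_middle_informative => // [[]].
    by move=> gamma Hgamma; apply: inV_var Hab Hgamma Hi.
  - move=> alpha Halpha; apply: (eval_mono HJ _ _ _ (proj1 (Hxi alpha))) => i _.
    rewrite args_assignment_map; case: in_dec => [/(proj2 (Hsv alpha) i) [HV _]|_];
      last exact: Nat.le_0_l.
    rewrite /restrict; case: excluded_middle_informative => // [[]].
    by move=> gamma Hgamma; apply: inV_so Hab Hgamma Halpha HV.
Qed.

Lemma skolem_upper a b beta : In (Le a b) Phi ->
  eval J (restrict (in_common_V b) beta) (subst xi b) <=
  evalSO J beta (skolem_values beta) b.
Proof.
  move=> Hab; rewrite eval_subst.
  apply: (evalSO_mono HJ); first exact: (proj2 (Hwf _ _ Hab)).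
  - by move=> i _; rewrite /restrict; case: excluded_middle_informative => _; lia.
  - move=> gamma Hgamma; apply: (eval_mono HJ _ _ _ (proj1 (Hxi gamma))) => i Hi.
    rewrite args_assignment_map /restrict.
    case: excluded_middle_informative => [Hcommon|_]; last exact: Nat.le_0_l.
    have Hsv_i : In i (sv gamma).
    { apply/(proj2 (Hsv gamma) i); split; first exact: Hcommon.
      by move=> Hnotin; apply: (proj2 Hmodel _ _ Hnotin Hi). }
    by case: in_dec.
Qed.

Lemma skolem_ext_satisfies : satisfies skolem_ext (sk sv Phi).
Proof.
  move=> x y /In_sk [a [b [Hab [-> ->]]]] beta; rewrite !eval_skolem.
  apply: Nat.le_trans (skolem_lower _ _ beta Hab) _.
  exact: Nat.le_trans (proj1 Hmodel _ _ Hab _) (skolem_upper _ _ beta Hab).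
Qed.

End Completeness.

Theorem mainTheorem11 (S : Type) (ar : S -> nat) (Phi : socp S)
  (sv : nat -> list nat) :
  wf_socp ar Phi ->
  enumerates_SV Phi sv ->
  (* (1) Soundness *)
  (forall J : S + nat -> list nat -> nat,
     interpretation (ar_sk ar sv) J ->
     satisfies J (sk sv Phi) ->
     so_subst (ar_sk ar sv) (xi_sk sv) /\ is_model J (xi_sk sv) (lift_socp Phi))
  /\
  (* (2) Completeness *)
  (forall (J : S -> list nat -> nat) (xi : nat -> term S),
     interpretation ar J ->
     so_subst ar xi ->
     is_model J xi Phi ->
     exists J' : S + nat -> list nat -> nat,
       interpretation (ar_sk ar sv) J' /\
       (forall g l, J' (inl g) l = J g l) /\
       satisfies J' (sk sv Phi)).
Proof.
  move=> Hwf Hsv; split.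
  - move=> J _ Hsat; split; first exact: xi_sk_so_subst.
    exact: xi_sk_model.
  - move=> J xi HJ Hxi Hmodel; exists (skolem_ext sv J xi); split.
    + exact: skolem_ext_interpretation HJ Hxi.
    + by split; last exact: skolem_ext_satisfies Hwf Hsv HJ Hxi Hmodel.
Qed.
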